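(* Let $H$ be a $d\times d$ Hermitian matrix and $1/d<t<1$. Then there exists a density operator $\rho^*$ with $\mathrm{Tr}((\rho^* )^2)=t$ that maximizes $\mathrm{Tr}(\rho H)$ over $S^t$, and any such $\rho^*$ is an optimizer of the (non-convex) problem $$\min\{\|\rho-H\|_2:\ \rho\succeq0,\ \mathrm{Tr}\rho=1,\ \mathrm{Tr}(\rho^2)=t\}.$$
   Context: $S^t=\{\rho\in\mathcal{L}(\mathbb{C}^d):\rho\succeq 0,\ \mathrm{Tr}\rho=1,\ \mathrm{Tr}(\rho^2)\le t\}$; $\|\cdot\|_2$ is the Frobenius norm. *)

From HB Require Import structures.
From mathcomp Require Import all_boot all_order all_algebra.
From mathcomp Require Import complex reals.
Set Implicit Arguments. Unset Strict Implicit. Unset Printing Implicit Defensive.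
Import Order.TTheory GRing.Theory Num.Theory.
Local Open Scope ring_scope.

Section Defs.
Variable R : realType.
Local Notation C := R[i].

Definition ctrmx m n (A : 'M[C]_(m, n)) : 'M[C]_(n, m) :=
  \matrix_(i, j) (A j i)^*.

Definition is_hermitian d (A : 'M[C]_d) : Prop := ctrmx A = A.

Definition is_psd d (A : 'M[C]_d) : Prop :=
  is_hermitian A /\ forall v : 'cV[C]_d, 0 <= (ctrmx v *m A *m v) 0 0.

Definition is_density d (rho : 'M[C]_d) : Prop := is_psd rho /\ \tr rho = 1.

Definition St d (t : R) (rho : 'M[C]_d) : Prop :=
  is_density rho /\ \tr (rho *m rho) <= real_complex R t.

Definition frob m n (A : 'M[C]_(m, n)) : C := sqrtC (\tr (ctrmx A *m A)).
End Defs.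

(** Diagonalise H = U^* diag(lambda) U.  Conjugating by U, the diagonal q of a
    density rho in S^t is a probability vector with sum q_i^2 <= Tr rho^2 <= t and
    Tr(rho H) = sum q_i lambda_i; conversely U^* diag(q) U is a density with exactly
    these data.  So the existence claim is the classical problem of maximising a
    linear form over the compact set {q >= 0, sum q = 1, sum q^2 <= t}, whose
    maximiser can be pushed onto the sphere sum q^2 = t.  For the second claim,
    once Tr rho^2 = Tr sigma^2 = t we have
    ||X - H||_2^2 = t - 2 Tr(X H) + Tr H^2, so maximising Tr(X H) minimises the
    distance to H. *)

From mathcomp Require Import all_boot all_order all_algebra.
From mathcomp Require Import complex reals.
From mathcomp Require Import classical_sets topology normedtype derive realfun.
From mathcomp Require Import ring lra.
From mathcomp Require Import sesquilinear spectral.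
Import Order.TTheory GRing.Theory Num.Theory.
Import numFieldNormedType.Exports.
Local Open Scope classical_set_scope.
Local Open Scope ring_scope.

Section ProbabilityVectors.
Context {R : realType} {n : nat}.
Implicit Types (p q mu : 'rV[R]_n) (t : R).

Definition prob_vec q := (forall i, 0 <= q ord0 i) /\ \sum_i q ord0 i = 1.

Definition sqsum q := \sum_i q ord0 i ^+ 2.

Definition wsum mu q := \sum_i q ord0 i * mu ord0 i.

Definition prob_ball t : set 'rV[R]_n := [set q | prob_vec q /\ sqsum q <= t].

Lemma prob_vec_le1 q i : prob_vec q -> q ord0 i <= 1.
Proof.
move=> [q_ge0 <-]; rewrite (bigD1 i) //= lerDl.
by apply: sumr_ge0 => j _; exact: q_ge0.
Qed.

Lemma prob_vec_delta k : prob_vec (delta_mx ord0 k).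
Proof.
split=> [i|]; first by rewrite mxE ler0n.
by rewrite (bigD1 k) //= big1 => [|i /negbTE ik]; rewrite !mxE ?ik ?eqxx ?addr0.
Qed.

Lemma prob_vec_convex p q r : prob_vec p -> prob_vec q -> 0 <= r <= 1 ->
  prob_vec ((1 - r) *: p + r *: q).
Proof.
move=> [p_ge0 p1] [q_ge0 q1] /andP[r_ge0 r_le1]; split=> [i|].
  by rewrite !mxE addr_ge0 // mulr_ge0 // subr_ge0.
under eq_bigr do rewrite !mxE.
by rewrite big_split /= -!mulr_sumr p1 q1 !mulr1 subrK.
Qed.

Lemma sqsum_delta k : sqsum (delta_mx ord0 k) = 1.
Proof.
rewrite /sqsum (bigD1 k) //= big1 => [|i /negbTE ik]; rewrite !mxE ?ik ?eqxx.
  by rewrite expr1n addr0.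
by rewrite expr0n.
Qed.

Lemma wsumD mu p q : wsum mu (p + q) = wsum mu p + wsum mu q.
Proof. by rewrite /wsum -big_split; apply: eq_bigr => i _; rewrite mxE mulrDl. Qed.

Lemma wsumZ mu r q : wsum mu (r *: q) = r * wsum mu q.
Proof. by rewrite /wsum mulr_sumr; apply: eq_bigr => i _; rewrite mxE mulrA. Qed.

Lemma wsum_delta mu k : wsum mu (delta_mx ord0 k) = mu ord0 k.
Proof.
rewrite /wsum (bigD1 k) //= big1 => [|i /negbTE ik]; rewrite !mxE ?ik ?eqxx.
  by rewrite mul1r addr0.
by rewrite mul0r.
Qed.

Lemma prob_vec_wsum_le mu q m : prob_vec q -> (forall i, mu ord0 i <= m) ->
  wsum mu q <= m.
Proof.
move=> [q_ge0 q1] mu_le; rewrite -[m]mul1r -q1 mulr_suml.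
by apply: ler_sum => i _; rewrite ler_wpM2l.
Qed.

Lemma continuous_sum_entries (f : 'I_n -> R -> R) :
  (forall i, continuous (f i)) ->
  continuous (fun q : 'rV[R]_n => \sum_i f i (q ord0 i)).
Proof.
move=> f_cont; apply: continuous_big => [|i _ q]; first exact: add_continuous.
exact: continuous_comp (@coord_continuous _ 1 n ord0 i q) (f_cont i _).
Qed.

Lemma continuous_sqsum : continuous sqsum.
Proof.
apply: (@continuous_sum_entries (fun=> (@GRing.exp R)^~ 2)) => i.
exact: exprn_continuous.
Qed.

Lemma closed_prob_ball t : closed (prob_ball t).
Proof.
have -> : prob_ball t = \bigcap_(i in setT) [set q : 'rV[R]_n | 0 <= q ord0 i] `&`
    ([set q : 'rV[R]_n | \sum_i q ord0 i = 1] `&` [set q | sqsum q <= t]).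
  apply/seteqP; split=> [q [[q_ge0 q1] qt]|q [q_ge0 [q1 qt]]] //.
  by split=> // i _; exact: q_ge0.
  by split=> //; split=> // i; exact: q_ge0.
apply: closedI; [apply: closed_bigI => i _ | apply: closedI].
- apply: (@preimage_closed _ _ (fun q : 'rV[R]_n => q ord0 i) [set x | 0 <= x]).
    by move=> q _; exact: coord_continuous.
  exact: closed_ge.
- apply: (@preimage_closed _ _ (fun q : 'rV[R]_n => \sum_i q ord0 i) [set x | x = 1]).
    by move=> q _; apply: (@continuous_sum_entries (fun=> id)) => i x; exact: cvg_id.
  exact: closed_eq.
- apply: (@preimage_closed _ _ sqsum [set x | x <= t]).
    by move=> q _; exact: continuous_sqsum.
  exact: closed_le.
Qed.

Lemma compact_prob_ball t : compact (prob_ball t).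
Proof.
apply: (subclosed_compact (closed_prob_ball t)
  (rV_compact (fun=> @segment_compact _ 0 1))) => q [qP _] i /=.
by rewrite in_itv /= qP.1 prob_vec_le1.
Qed.

Lemma prob_ball_uniform t : (0 < n)%N -> n%:R^-1 <= t ->
  prob_ball t (const_mx n%:R^-1).
Proof.
move=> n_gt0 tn; have n_neq0 : n%:R != 0 :> R by rewrite pnatr_eq0 -lt0n.
split; first split=> [i|]; rewrite /sqsum.
- by rewrite mxE invr_ge0 ler0n.
- under eq_bigr do rewrite mxE.
  by rewrite sumr_const card_ord -[LHS]mulr_natr mulVf.
- under eq_bigr do rewrite mxE.
  by rewrite sumr_const card_ord -[X in X <= _]mulr_natr expr2 -mulrA mulVf ?mulr1.
Qed.

Lemma continuous_wsum mu : continuous (wsum mu).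
Proof.
apply: (@continuous_sum_entries (fun i x => x * mu ord0 i)) => i x.
by apply: continuousM; [exact: cvg_id | exact: cvg_cst].
Qed.

Lemma prob_ball_argmax t mu : (0 < n)%N -> n%:R^-1 <= t ->
  exists2 p, prob_ball t p & forall q, prob_ball t q -> wsum mu q <= wsum mu p.
Proof.
move=> n_gt0 tn.
have [|p /set_mem pB p_max] := compact_EVT_max _ (compact_prob_ball t)
  (continuous_subspaceT (@continuous_wsum mu)).
  by exists (const_mx n%:R^-1); exact: prob_ball_uniform.
by exists p => // q qB; apply: p_max; exact: mem_set.
Qed.

(* Sliding a maximiser towards the vertex of a largest weight of mu does not
   decrease the objective, and sum q^2 reaches t on the way by the IVT. *)
Lemma prob_ball_argmax_sqsum_eq t mu : (0 < n)%N -> n%:R^-1 <= t -> t <= 1 ->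
  exists p, [/\ prob_ball t p, sqsum p = t &
                forall q, prob_ball t q -> wsum mu q <= wsum mu p].
Proof.
move=> n_gt0 tn t1; have [p0 [p0P p0t] p0_max] := prob_ball_argmax t mu n_gt0 tn.
have [k _ k_max] := @arg_maxP _ _ 'I_n (Ordinal n_gt0) xpredT (mu ord0) isT.
pose seg r := (1 - r) *: p0 + r *: delta_mx ord0 k.
have seg_cont : continuous (sqsum \o seg).
  move=> r; apply: continuous_comp; last exact: continuous_sqsum.
  apply: continuousD; last exact: continuousZr_tmp cvg_id.
  by apply: continuousZr_tmp; apply: continuousB; [exact: cvg_cst | exact: cvg_id].
have [r r01 seg_t] : exists2 r, r \in `[0, 1] & sqsum (seg r) = t.
  apply: IVT => //; first exact: continuous_subspaceT.
  rewrite /= /seg subr0 subrr !scale0r !scale1r add0r addr0 sqsum_delta.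
  by rewrite (min_l (le_trans p0t t1)) (max_r (le_trans p0t t1)) p0t.
have r01' : 0 <= r <= 1 by move: r01; rewrite in_itv.
exists (seg r); split=> //.
  split; last by rewrite seg_t.
  by apply: prob_vec_convex => //; exact: prob_vec_delta.
move=> q qB; apply: le_trans (p0_max q qB) _.
have p0_le_k : wsum mu p0 <= mu ord0 k by apply: prob_vec_wsum_le => // i; exact: k_max.
rewrite /seg wsumD !wsumZ wsum_delta.
by move: r01' => /andP[r0 _]; nra.
Qed.
End ProbabilityVectors.

Section ConjugateTranspose.
Context {R : realType}.
Local Notation C := R[i].

Lemma ctrmxE {m n : nat} (A : 'M[C]_(m, n)) : ctrmx A = map_mx Num.conj A^T.
Proof. by apply/matrixP => i j; rewrite !mxE. Qed.

Lemma ctrmx_mul {m n p : nat} (A : 'M[C]_(m, n)) (B : 'M[C]_(n, p)) :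
  ctrmx (A *m B) = ctrmx B *m ctrmx A.
Proof. by rewrite !ctrmxE trmx_mul map_mxM. Qed.

Lemma ctrmxK {m n : nat} (A : 'M[C]_(m, n)) : ctrmx (ctrmx A) = A.
Proof. by apply/matrixP => i j; rewrite !mxE conjCK. Qed.

Lemma ctrmxB {m n : nat} (A B : 'M[C]_(m, n)) : ctrmx (A - B) = ctrmx A - ctrmx B.
Proof. by apply/matrixP => i j; rewrite !mxE rmorphB. Qed.

Lemma hermitian_hermsymmx {n : nat} (A : 'M[C]_n) : is_hermitian A -> A \is hermsymmx.
Proof.
move=> A_herm; apply/is_hermitianmxP; rewrite expr0 scale1r.
by apply/matrixP => i j; rewrite -[in LHS]A_herm !mxE.
Qed.

Lemma hermitian_conjmx {m n : nat} (M : 'M[C]_(m, n)) (S : 'M[C]_n) :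
  is_hermitian S -> is_hermitian (M *m S *m ctrmx M).
Proof. by move=> S_herm; rewrite /is_hermitian !ctrmx_mul ctrmxK S_herm mulmxA. Qed.

Lemma psd_conjmx {m n : nat} (M : 'M[C]_(m, n)) (S : 'M[C]_n) :
  is_psd S -> is_psd (M *m S *m ctrmx M).
Proof.
move=> [S_herm S_ge0]; split=> [|v]; first exact: hermitian_conjmx.
by have := S_ge0 (ctrmx M *m v); rewrite ctrmx_mul ctrmxK !mulmxA.
Qed.

Lemma psd_diag_ge0 {n : nat} (S : 'M[C]_n) i : is_psd S -> 0 <= S i i.
Proof.
have ctrmx_delta : ctrmx (delta_mx i 0 : 'cV[C]_n) = delta_mx 0 i.
  by apply/matrixP => a b; rewrite !mxE rmorph_nat andbC.
move=> [_ /(_ (delta_mx i 0))]; rewrite ctrmx_delta -rowE -colE.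
by rewrite !mxE.
Qed.

Lemma tr_ctrmx_mul_ge0 {m n : nat} (A : 'M[C]_(m, n)) : 0 <= \tr (ctrmx A *m A).
Proof.
apply: sumr_ge0 => i _; rewrite mxE; apply: sumr_ge0 => k _.
by rewrite mxE mulrC mul_conjC_ge0.
Qed.

Lemma tr_ctrmx_subr_herm {n : nat} (X H : 'M[C]_n) : is_hermitian X -> is_hermitian H ->
  \tr (ctrmx (X - H) *m (X - H)) =
  \tr (X *m X) - 2%:R * \tr (X *m H) + \tr (H *m H).
Proof.
move=> X_herm H_herm; rewrite ctrmxB X_herm H_herm mulmxBl !mulmxBr !raddfB /=.
rewrite [\tr (H *m X)]mxtrace_mulC; ring.
Qed.

Lemma frob_subr_le {n : nat} (H rho sigma : 'M[C]_n) :
  is_hermitian H -> is_hermitian rho -> is_hermitian sigma ->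
  \tr (rho *m rho) = \tr (sigma *m sigma) -> \tr (sigma *m H) <= \tr (rho *m H) ->
  frob (rho - H) <= frob (sigma - H).
Proof.
move=> H_herm rho_herm sigma_herm sq_eq le_H.
rewrite /frob ler_sqrtC ?nnegrE ?tr_ctrmx_mul_ge0 //.
rewrite !tr_ctrmx_subr_herm // sq_eq lerD2r lerD2l lerN2.
by rewrite ler_wpM2l ?ler0n.
Qed.

Lemma sum_diag_sqr_le_tr {n : nat} (S : 'M[C]_n) : is_hermitian S ->
  \sum_i S i i ^+ 2 <= \tr (S *m S).
Proof.
move=> S_herm; apply: ler_sum => i _; rewrite [X in _ <= X]mxE (bigD1 i) //= expr2 lerDl.
apply: sumr_ge0 => j _; have -> : S j i = (S i j)^* by rewrite -{1}S_herm mxE.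
exact: mul_conjC_ge0.
Qed.

Lemma psd_diag_mx {n : nat} (c : 'rV[C]_n) : (forall i, 0 <= c 0 i) -> is_psd (diag_mx c).
Proof.
move=> c_ge0; split=> [|v].
  apply/matrixP => i j; rewrite !mxE eq_sym; case: eqP => [->|_]; last first.
    by rewrite !mulr0n conjC0.
  by rewrite !mulr1n conj_Creal // ger0_real.
rewrite mul_mx_diag mxE; apply: sumr_ge0 => j _.
by rewrite !mxE mulrAC mulr_ge0 // mulrC mul_conjC_ge0.
Qed.

Lemma mxtrace_conjmx {n : nat} (M S : 'M[C]_n) : ctrmx M *m M = 1%:M ->
  \tr (M *m S *m ctrmx M) = \tr S.
Proof. by move=> MM1; rewrite mxtrace_mulC mulmxA MM1 mul1mx. Qed.
End ConjugateTranspose.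

Section SpectralCoordinates.
Context {R : realType} {n : nat}.
Variable H : 'M[R[i]]_n.
Local Notation C := R[i].
Local Notation U := (spectralmx H).
Local Notation conjU S := (U *m S *m ctrmx U).

Definition eigvals : 'rV[R]_n := \row_i complex.Re (spectral_diag H 0 i).

Definition eigweights (S : 'M[C]_n) : 'rV[R]_n := \row_i complex.Re (conjU S i i).

Implicit Type p : 'rV[R]_n.

Definition eigdensity p : 'M[C]_n :=
  ctrmx U *m diag_mx (map_mx (real_complex R) p) *m U.

Lemma spectralmx_mul_ctrmx : U *m ctrmx U = 1%:M.
Proof. by rewrite ctrmxE; apply/unitarymxP; exact: spectral_unitarymx. Qed.

Lemma ctrmx_mul_spectralmx : ctrmx U *m U = 1%:M.
Proof.
have /unitarymxP : map_mx Num.conj U^T \is unitarymx.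
  by rewrite trmxC_unitary spectral_unitarymx.
by rewrite trmxCK -ctrmxE.
Qed.

Lemma conjU_mul (S T : 'M[C]_n) : conjU (S *m T) = conjU S *m conjU T.
Proof. by rewrite !mulmxA -[_ *m ctrmx U *m U]mulmxA ctrmx_mul_spectralmx mulmx1. Qed.

Lemma conjU_eigdensity p :
  conjU (eigdensity p) = diag_mx (map_mx (real_complex R) p).
Proof.
by rewrite !mulmxA spectralmx_mul_ctrmx mul1mx -mulmxA spectralmx_mul_ctrmx mulmx1.
Qed.

Lemma eigweights_eigdensity p : eigweights (eigdensity p) = p.
Proof.
by apply/rowP => i; rewrite mxE conjU_eigdensity !mxE eqxx mulr1n.
Qed.

Lemma mxtrace_sqr_eigdensity p :
  \tr (eigdensity p *m eigdensity p) = real_complex R (sqsum p).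
Proof.
rewrite -(mxtrace_conjmx _ _ ctrmx_mul_spectralmx) conjU_mul conjU_eigdensity.
rewrite mulmx_diag mxtrace_diag rmorph_sum.
by apply: eq_bigr => i _; rewrite !mxE rmorphXn expr2.
Qed.

Lemma eigdensity_density p : prob_vec p -> is_density (eigdensity p).
Proof.
move=> [p_ge0 p1]; split.
  have := psd_conjmx (ctrmx U) _ (psd_diag_mx (map_mx (real_complex R) p) _).
  by rewrite ctrmxK; apply=> i; rewrite mxE lecR.
rewrite -(mxtrace_conjmx _ _ ctrmx_mul_spectralmx) conjU_eigdensity mxtrace_diag.
by rewrite -[1]/(real_complex R 1) -p1 rmorph_sum; apply: eq_bigr => i _; rewrite mxE.
Qed.

Hypothesis H_herm : is_hermitian H.

Lemma spectral_decomposition : H = ctrmx U *m diag_mx (spectral_diag H) *m U.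
Proof.
have /orthomx_spectralP := hermitian_normalmx (hermitian_hermsymmx _ H_herm).
by rewrite invmx_unitary ?spectral_unitarymx // ctrmxE.
Qed.

Lemma spectral_diag_real i : spectral_diag H 0 i = real_complex R (eigvals 0 i).
Proof.
rewrite mxE RRe_real //.
by have /mxOverP := hermitian_spectral_diag_real (hermitian_hermsymmx _ H_herm); apply.
Qed.

Lemma eigweightsE (S : 'M[C]_n) i : is_psd S ->
  conjU S i i = real_complex R (eigweights S 0 i).
Proof.
move=> S_psd; rewrite [eigweights S 0 i]mxE RRe_real // ger0_real //.
exact/psd_diag_ge0/psd_conjmx.
Qed.

Lemma mxtrace_mul_eigweights (S : 'M[C]_n) : is_psd S ->
  \tr (S *m H) = real_complex R (wsum eigvals (eigweights S)).
Proof.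
move=> S_psd; rewrite {1}spectral_decomposition !mulmxA mxtrace_mulC !mulmxA.
rewrite mul_mx_diag rmorph_sum; apply: eq_bigr => i _.
by rewrite mxE eigweightsE // spectral_diag_real rmorphM.
Qed.

Lemma prob_vec_eigweights (S : 'M[C]_n) : is_density S -> prob_vec (eigweights S).
Proof.
move=> [S_psd S_tr1]; split=> [i|].
  by rewrite -lecR -eigweightsE //; exact/psd_diag_ge0/psd_conjmx.
apply: complexI; rewrite rmorph_sum -[RHS]S_tr1.
rewrite -(mxtrace_conjmx _ S ctrmx_mul_spectralmx).
by apply: eq_bigr => i _; rewrite eigweightsE.
Qed.

Lemma sqsum_eigweights_le (S : 'M[C]_n) : is_psd S ->
  real_complex R (sqsum (eigweights S)) <= \tr (S *m S).
Proof.
move=> S_psd; rewrite -(mxtrace_conjmx _ (S *m S) ctrmx_mul_spectralmx) conjU_mul.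
have -> : real_complex R (sqsum (eigweights S)) = \sum_i conjU S i i ^+ 2.
  by rewrite rmorph_sum; apply: eq_bigr => i _; rewrite rmorphXn eigweightsE.
exact/sum_diag_sqr_le_tr/hermitian_conjmx/S_psd.1.
Qed.

Lemma prob_ball_eigweights t (S : 'M[C]_n) : St t S -> prob_ball t (eigweights S).
Proof.
move=> [S_density S_sq]; split; first exact: prob_vec_eigweights.
by rewrite -lecR (le_trans (sqsum_eigweights_le _ S_density.1)).
Qed.
End SpectralCoordinates.

Theorem mainTheorem5 (R : realType) (d : nat) (H : 'M[R[i]]_d) (t : R) :
  (0 < d)%N -> is_hermitian H -> (d%:R)^-1 < t -> t < 1 ->
  (exists rho : 'M[R[i]]_d,
      St t rho /\ \tr (rho *m rho) = real_complex R t /\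
      (forall sigma, St t sigma -> \tr (sigma *m H) <= \tr (rho *m H)))
  /\
  (forall rho : 'M[R[i]]_d,
      St t rho -> \tr (rho *m rho) = real_complex R t ->
      (forall sigma, St t sigma -> \tr (sigma *m H) <= \tr (rho *m H)) ->
      (is_psd rho /\ \tr rho = 1 /\ \tr (rho *m rho) = real_complex R t) /\
      (forall sigma : 'M[R[i]]_d,
          is_psd sigma -> \tr sigma = 1 -> \tr (sigma *m sigma) = real_complex R t ->
          frob (rho - H) <= frob (sigma - H))).
Proof.
move=> d_gt0 H_herm t_gt t_lt1; split; last first.
  move=> rho [[rho_psd rho_tr] _] rho_t rho_max.
  split=> // sigma sigma_psd sigma_tr sigma_t.
  apply: frob_subr_le rho_psd.1 sigma_psd.1 _ _ => //; first by rewrite rho_t sigma_t.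
  by apply: rho_max; split; last by rewrite sigma_t.
have [p [[pP _] p_t p_max]] :=
  prob_ball_argmax_sqsum_eq t (eigvals H) d_gt0 (ltW t_gt) (ltW t_lt1).
pose rho := eigdensity H p.
have rho_density : is_density rho := eigdensity_density H p pP.
have rho_t : \tr (rho *m rho) = real_complex R t by rewrite mxtrace_sqr_eigdensity p_t.
exists rho; split; first by split; last by rewrite rho_t.
split=> // sigma sigma_St.
rewrite (mxtrace_mul_eigweights _ H_herm _ sigma_St.1.1).
rewrite (mxtrace_mul_eigweights _ H_herm _ rho_density.1) eigweights_eigdensity lecR.
exact/p_max/prob_ball_eigweights.
Qed.
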